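(* Let $p,\tilde{p} \in [0,1]$ and let $\mathbf{x} = (x_1,x_2,u)$ and $\tilde{\mathbf{x}} = (\tilde{x}_1,\tilde{x}_2,\tilde{u})$ be arbitrary configurations of $n$ agents. Then for all $t \geq 0$: (1) if $\tilde{p} \leq p$, $\tilde{x}_1 \leq x_1$ and $\tilde{x}_2 \geq x_2$, then $\Pr[T_1(p,\mathbf{x}) \leq t] \geq \Pr[T_1(\tilde{p},\tilde{\mathbf{x}}) \leq t]$; (2) if $\tilde{p} \geq p$, $\tilde{x}_1 \geq x_1$ and $\tilde{x}_2 \leq x_2$, then $\Pr[T_2(p,\mathbf{x}) \leq t] \geq \Pr[T_2(\tilde{p},\tilde{\mathbf{x}}) \leq t]$.
   Context: Population protocol with $n$ agents, each in a state from $Q=\{1,2,\bot\}$ (Opinion 1, Opinion 2, undecided). At each time step a scheduler picks an ordered pair $(i,j)$ of agents uniformly at random, independently of the past; $i$ is the initiator and $j$ the responder, and only the initiator changes state. The stubborn undecided state dynamics $\mathrm{USD}_p$ with stubbornness $p\in[0,1]$ has transitions: if the initiator is in state $2$ and the responder in state $1$, the initiator becomes $\bot$; if the initiator is in state $1$ and the responder in state $2$, the initiator becomes $\bot$ with probability $1-p$ and stays $1$ with probability $p$; if the initiator is $\bot$, it adopts the responder's state; otherwise nothing changes. A configuration $(x_1,x_2,u)$ gives the numbers of agents in states $1$, $2$, $\bot$ (summing to $n$). $\mathrm{USD}_p(\mathbf{x})$ is the process started in $\mathbf{x}$, time measured in interactions, and $T_i(p,\mathbf{x})$ is the first time at which all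 $n$ agents have Opinion $i$ in $\mathrm{USD}_p(\mathbf{x})$ ($\infty$ if never). *)

From HB Require Import structures.
From mathcomp Require Import all_boot all_order all_algebra.
Set Implicit Arguments. Unset Strict Implicit. Unset Printing Implicit Defensive.
Import Order.TTheory GRing.Theory Num.Theory.
Local Open Scope ring_scope.

Inductive state := Op1 | Op2 | Und.

Definition state_eqb (a b : state) : bool :=
  match a, b with
  | Op1, Op1 | Op2, Op2 | Und, Und => true
  | _, _ => false
  end.

Lemma state_eqP : Equality.axiom state_eqb.
Proof. by case; case; constructor. Qed.

HB.instance Definition _ := hasDecEq.Build state state_eqP.

Definition states : seq state := [:: Op1; Op2; Und].

(* A configuration: number of agents in each state. *)
Definition config := state -> nat.

Definition mkcfg (x1 x2 u : nat) : config :=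
  fun q => match q with Op1 => x1 | Op2 => x2 | Und => u end.

(* Probability that the scheduler picks an initiator in state a and a
   (distinct) responder in state b: ordered pairs of distinct agents,
   uniform among the n(n-1) such pairs. *)
Definition weight {R : numFieldType} (n : nat) (c : config) (a b : state) : R :=
  (c a * (c b - (a == b)))%:R / (n * n.-1)%:R.

(* Transition probability of USD_p: initiator in state a, responder in
   state b; probability that the initiator ends in state c. *)
Definition delta {R : numFieldType} (p : R) (a b c : state) : R :=
  match a, b with
  | Op2, Op1 => (c == Und)%:R
  | Op1, Op2 => if c == Op1 then p else if c == Und then 1 - p else 0
  | Und, b' => (c == b')%:R
  | a', _ => (c == a')%:R
  end.

Definition update (cf : config) (a c : state) : config :=
  fun q => (cf q - (q == a) + (q == c))%N.

Definition step {R : numFieldType} (p : R) (n : nat) (f : config -> R)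
    (cf : config) : R :=
  \sum_(a <- states) \sum_(b <- states) \sum_(c <- states)
    weight n cf a b * delta p a b c * f (update cf a c).

Definition consensus (n : nat) (i : state) (cf : config) : bool := cf i == n.

(* hitP p n i t cf = Pr[T_i(p, cf) <= t] in USD_p(cf) with n agents:
   the probability that the chain started in cf reaches the configuration
   where all agents have opinion i within t interactions. *)
Fixpoint hitP {R : numFieldType} (p : R) (n : nat) (i : state) (t : nat)
    (cf : config) : R :=
  if consensus n i cf then 1 else
  match t with
  | 0 => 0
  | t'.+1 => step p n (hitP p n i t') cf
  end.

From mathcomp Require Import all_boot all_order all_algebra ring zify.
From Stdlib Require Import FunctionalExtensionality.
Import Order.TTheory GRing.Theory Num.Theory.
Set Implicit Arguments. Unset Strict Implicit.
Local Open Scope ring_scope.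

(** Both hitting probabilities are computed by the backward recursion
    [hitP (t+1) = step (hitP t)] off the consensus set, so it suffices that the
    one-step operator [step p] maps functions that are monotone for the order
    "more agents of opinion 1, fewer of opinion 2" to monotone functions, and
    that on such functions it is nondecreasing in the stubbornness [p].  Both
    facts reduce to explicit identities: the relevant difference of the two
    (unnormalised) one-step expectations is a sum of nonnegative rates times
    increments of [f] between comparable configurations.  Opinion 2 is handled
    by applying the same facts to [-f] and the reversed order. *)

Definition cfg_sum (c : config) : nat := (c Op1 + c Op2 + c Und)%N.
Arguments cfg_sum c /.

Definition cfg_le (n : nat) (c d : config) : Prop :=
  [/\ cfg_sum c = n, cfg_sum d = n, (c Op1 <= d Op1)%N & (d Op2 <= c Op2)%N].

Lemma mkcfgE (c : config) : c = mkcfg (c Op1) (c Op2) (c Und).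
Proof. by apply: functional_extensionality; case. Qed.

Lemma update_mkcfg x1 x2 u a c : update (mkcfg x1 x2 u) a c =
  mkcfg (x1 - (Op1 == a) + (Op1 == c)) (x2 - (Op2 == a) + (Op2 == c))
        (u - (Und == a) + (Und == c)).
Proof. by apply: functional_extensionality; case. Qed.

(* The five terms are the rates of the moves 1 -> ⊥ (a non-stubborn 1 meets a 2),
   2 -> ⊥, ⊥ -> 1, ⊥ -> 2, and of the interactions that change nothing; a
   truncated [.-1] only occurs in a term whose rate is then 0. *)
Definition scaled_step {R : numFieldType} (p : R) (f : config -> R) x1 x2 u : R :=
  (x1 * x2)%:R * (1 - p) * f (mkcfg x1.-1 x2 u.+1)
  + (x1 * x2)%:R * f (mkcfg x1 x2.-1 u.+1)
  + (u * x1)%:R * f (mkcfg x1.+1 x2 u.-1) + (u * x2)%:R * f (mkcfg x1 x2.+1 u.-1)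
  + ((x1 * x1.-1 + x2 * x2.-1 + u * u.-1 + x1 * u + x2 * u)%:R + (x1 * x2)%:R * p)
    * f (mkcfg x1 x2 u).

Lemma step_mkcfg {R : numFieldType} (p : R) n f x1 x2 u :
  step p n f (mkcfg x1 x2 u) = scaled_step p f x1 x2 u / (n * n.-1)%:R.
Proof.
rewrite /step /states !big_cons !big_nil /weight !update_mkcfg /= /scaled_step.
by case: x1 => [|x1]; case: x2 => [|x2]; case: u => [|u];
  rewrite ?subn0 ?addn0 ?subn1 ?addn1 /= ?mul0n ?muln0 ?mulr0n ?mulr1n; ring.
Qed.

Lemma step_opp {R : numFieldType} (p : R) n f c :
  step p n (fun c' => - f c') c = - step p n f c.
Proof.
rewrite /step -sumrN; apply: eq_bigr => a _; rewrite -sumrN.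
apply: eq_bigr => b _; rewrite -sumrN; apply: eq_bigr => c' _; exact: mulrN.
Qed.

Section ScaledStep.
Variables (R : realFieldType) (n : nat).
Implicit Types (p : R) (f g : config -> R).

Lemma natr_mul_subr_ge0 (k : nat) (r P Q : R) :
  0 <= r -> ((0 < k)%N -> P <= Q) -> 0 <= k%:R * r * (Q - P).
Proof.
case: k => [|k] r0 PQ; first by rewrite !mul0r.
by rewrite !mulr_ge0 // subr_ge0; apply: PQ.
Qed.

Section Monotone.
Variables (p : R) (f : config -> R).
Hypotheses (p_ge0 : 0 <= p) (p_le1 : p <= 1).
Hypothesis f_homo : {homo f : c d / cfg_le n c d >-> c <= d}.

Let q_ge0 : 0 <= 1 - p. Proof. by rewrite subr_ge0. Qed.

Lemma scaled_step_und_to_op1 a b w : (a + b + w.+1 = n)%N ->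
  scaled_step p f a b w.+1 <= scaled_step p f a.+1 b w.
Proof.
move=> hn; rewrite -subr_ge0.
set F := fun x y z => f (mkcfg x y z).
have -> : scaled_step p f a.+1 b w - scaled_step p f a b w.+1 =
   (a * b)%:R * (1 - p) * (F a b w.+1 - F a.-1 b w.+2)
 + (a * b)%:R * 1 * (F a.+1 b.-1 w.+1 - F a b.-1 w.+2)
 + (w * a)%:R * 1 * (F a.+2 b w.-1 - F a.+1 b w)
 + (w * b)%:R * 1 * (F a.+1 b.+1 w.-1 - F a b.+1 w)
 + (a * a.-1 + b * b.-1 + w * w.-1 + a * w + b * w)%:R * 1 * (F a.+1 b w - F a b w.+1)
 + (a * b)%:R * p * (F a.+1 b w - F a b w.+1)
 + b%:R * p * (F a.+1 b w - F a b.+1 w)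
 + b%:R * (1 - p) * (F a b w.+1 - F a b.+1 w)
 + w%:R * 1 * (F a.+1 b w - F a b w.+1)
 + a%:R * 1 * (F a.+1 b w - F a b w.+1)
 + b%:R * 1 * (F a.+1 b.-1 w.+1 - F a b w.+1)
 + w%:R * 1 * (F a.+2 b w.-1 - F a b w.+1).
  rewrite /scaled_step /F; clear hn.
  by case: a => [|a]; case: b => [|b]; case: w => [|w];
    rewrite /= ?mul0n ?muln0 ?mulr0n ?mulr1n; ring.
by rewrite !addr_ge0 //; apply: natr_mul_subr_ge0 => // k0; apply: f_homo; split=> /=; nia.
Qed.

Lemma scaled_step_op2_to_und a b w : (a + b.+1 + w = n)%N ->
  scaled_step p f a b.+1 w <= scaled_step p f a b w.+1.
Proof.
move=> hn; rewrite -subr_ge0.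
set F := fun x y z => f (mkcfg x y z).
have -> : scaled_step p f a b w.+1 - scaled_step p f a b.+1 w =
   (a * b)%:R * (1 - p) * (F a.-1 b w.+2 - F a.-1 b.+1 w.+1)
 + (a * b)%:R * 1 * (F a b.-1 w.+2 - F a b w.+1)
 + (w * a)%:R * 1 * (F a.+1 b w - F a.+1 b.+1 w.-1)
 + (w * b)%:R * 1 * (F a b.+1 w - F a b.+2 w.-1)
 + (a * a.-1 + b * b.-1 + w * w.-1 + a * w + b * w)%:R * 1 * (F a b w.+1 - F a b.+1 w)
 + (a * b)%:R * p * (F a b w.+1 - F a b.+1 w)
 + a%:R * 1 * (F a.+1 b w - F a b w.+1)
 + w%:R * 1 * (F a b w.+1 - F a b.+1 w)
 + a%:R * p * (F a b w.+1 - F a b.+1 w)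
 + a%:R * (1 - p) * (F a b w.+1 - F a.-1 b.+1 w.+1)
 + b%:R * 1 * (F a b w.+1 - F a b.+1 w)
 + w%:R * 1 * (F a b w.+1 - F a b.+2 w.-1).
  rewrite /scaled_step /F; clear hn.
  by case: a => [|a]; case: b => [|b]; case: w => [|w];
    rewrite /= ?mul0n ?muln0 ?mulr0n ?mulr1n; ring.
by rewrite !addr_ge0 //; apply: natr_mul_subr_ge0 => // k0; apply: f_homo; split=> /=; nia.
Qed.

Lemma scaled_step_homo x1 x2 u y1 y2 v :
  cfg_le n (mkcfg y1 y2 v) (mkcfg x1 x2 u) ->
  scaled_step p f y1 y2 v <= scaled_step p f x1 x2 u.
Proof.
move=> [/= hy hx h1 h2].
have [d hd] : exists d, (x1 - y1 + (y2 - x2) = d)%N by eexists.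
elim: d y1 y2 v hy h1 h2 hd => [|d IH] y1 y2 v hy h1 h2 hd.
  by have [-> -> ->] : [/\ y1 = x1, y2 = x2 & v = u] by split; lia.
have [lt_x2y2|le_y2x2] := ltnP x2 y2.
  case: y2 hy h2 hd lt_x2y2 => [//|y2] hy h2 hd lt_x2y2.
  apply: le_trans (scaled_step_op2_to_und hy) _; apply: IH; lia.
case: v hy hd => [|v] hy hd; first lia.
apply: le_trans (scaled_step_und_to_op1 hy) _; apply: IH; lia.
Qed.

End Monotone.

Lemma scaled_step_homo_param p pt f x1 x2 u : pt <= p ->
  {homo f : c d / cfg_le n c d >-> c <= d} -> (x1 + x2 + u = n)%N ->
  scaled_step pt f x1 x2 u <= scaled_step p f x1 x2 u.
Proof.
move=> pt_le f_homo hn; rewrite -subr_ge0.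
have -> : scaled_step p f x1 x2 u - scaled_step pt f x1 x2 u =
  (x1 * x2)%:R * (p - pt) * (f (mkcfg x1 x2 u) - f (mkcfg x1.-1 x2 u.+1)).
  by rewrite /scaled_step; ring.
by apply: natr_mul_subr_ge0; rewrite ?subr_ge0 // => k0; apply: f_homo; split=> /=; nia.
Qed.

Lemma scaled_step_le p f g x1 x2 u : 0 <= p <= 1 ->
  (forall c, cfg_sum c = n -> f c <= g c) -> (x1 + x2 + u = n)%N ->
  scaled_step p f x1 x2 u <= scaled_step p g x1 x2 u.
Proof.
move=> /andP[p_ge0 p_le1] fg hn; rewrite -subr_ge0.
have q_ge0 : 0 <= 1 - p by rewrite subr_ge0.
set D := fun y1 y2 v => g (mkcfg y1 y2 v) - f (mkcfg y1 y2 v).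
have -> : scaled_step p g x1 x2 u - scaled_step p f x1 x2 u =
  (x1 * x2)%:R * (1 - p) * D x1.-1 x2 u.+1 + (x1 * x2)%:R * 1 * D x1 x2.-1 u.+1
  + (u * x1)%:R * 1 * D x1.+1 x2 u.-1 + (u * x2)%:R * 1 * D x1 x2.+1 u.-1
  + 1%:R * ((x1 * x1.-1 + x2 * x2.-1 + u * u.-1 + x1 * u + x2 * u)%:R
            + (x1 * x2)%:R * p) * D x1 x2 u.
  by rewrite /scaled_step /D; ring.
rewrite /D; repeat apply: addr_ge0; apply: natr_mul_subr_ge0 => [|k0].
all: try by apply: fg => /=; nia.
all: by [exact: q_ge0 | exact: ler01 | rewrite addr_ge0 ?mulr_ge0].
Qed.

End ScaledStep.

Lemma scaled_step_cst1 (R : numFieldType) (p : R) x1 x2 u :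
  scaled_step p (fun=> 1) x1 x2 u = ((x1 + x2 + u) * (x1 + x2 + u).-1)%:R.
Proof.
have natr_mul_pred m : (m * m.-1)%:R = m%:R * m%:R - m%:R :> R.
  by case: m => [|m] /=; rewrite natrM; ring.
by rewrite /scaled_step !natrD !natr_mul_pred !natrM !natrD; ring.
Qed.

Section StepOperator.
Variables (R : realFieldType) (n : nat).
Implicit Types (p pt : R) (f g : config -> R) (c d : config).

Lemma step_homo_cfg p f : 0 <= p <= 1 ->
  {homo f : c d / cfg_le n c d >-> c <= d} ->
  {homo step p n f : c d / cfg_le n c d >-> c <= d}.
Proof.
move=> /andP[p0 p1] f_homo c d cd.
rewrite (mkcfgE c) (mkcfgE d) !step_mkcfg ler_wpM2r ?invr_ge0 ?ler0n //.
by apply: (scaled_step_homo p0 p1 f_homo); rewrite -!mkcfgE.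
Qed.

Lemma step_homo_param p pt f c : pt <= p ->
  {homo f : c d / cfg_le n c d >-> c <= d} -> cfg_sum c = n ->
  step pt n f c <= step p n f c.
Proof.
move=> pt_le f_homo hc.
rewrite (mkcfgE c) !step_mkcfg ler_wpM2r ?invr_ge0 ?ler0n //.
exact: scaled_step_homo_param pt_le f_homo hc.
Qed.

Lemma step_le p f g c : 0 <= p <= 1 ->
  (forall c', cfg_sum c' = n -> f c' <= g c') -> cfg_sum c = n ->
  step p n f c <= step p n g c.
Proof.
move=> hp fg hc.
rewrite (mkcfgE c) !step_mkcfg ler_wpM2r ?invr_ge0 ?ler0n //.
exact: scaled_step_le hp fg hc.
Qed.

Lemma step_cst1 p c : (1 < n)%N -> cfg_sum c = n -> step p n (fun=> 1) c = 1.
Proof.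
move=> n_gt1 hc; rewrite (mkcfgE c) step_mkcfg scaled_step_cst1 -/(cfg_sum c) hc.
by rewrite divff // pnatr_eq0 muln_eq0; apply/norP; split; lia.
Qed.

Lemma hitP_consensus p i t c : consensus n i c -> hitP p n i t c = 1.
Proof. by case: t => [|t] /= ->. Qed.

Lemma hitP_le1 p i t c : (1 < n)%N -> 0 <= p <= 1 -> cfg_sum c = n ->
  hitP p n i t c <= 1.
Proof.
move=> n_gt1 hp; elim: t c => [|t IH] c hc /=; case: ifP => // _.
by rewrite -(step_cst1 p n_gt1 hc); apply: step_le.
Qed.

Lemma hitP_homo p i (le : config -> config -> Prop) :
  (1 < n)%N -> 0 <= p <= 1 ->
  (forall c d, le c d -> cfg_sum c = n) ->
  (forall c d, le c d -> consensus n i c -> consensus n i d) ->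
  (forall f, {homo f : c d / le c d >-> c <= d} ->
             {homo step p n f : c d / le c d >-> c <= d}) ->
  forall t, {homo hitP p n i t : c d / le c d >-> c <= d}.
Proof.
move=> n_gt1 hp le_sum le_consensus step_homo.
elim=> [|t IH] c d cd; have [cons_d|ncons_d] := boolP (consensus n i d).
all: try by rewrite (hitP_consensus _ _ cons_d) hitP_le1 // (le_sum _ _ cd).
all: rewrite /= (negbTE ncons_d) (negbTE (contra (le_consensus c d cd) ncons_d)) //.
exact: step_homo IH _ _ cd.
Qed.

Lemma hitP_le_param p pt i (le : config -> config -> Prop) :
  0 <= pt <= 1 ->
  (forall t, {homo hitP p n i t : c d / le c d >-> c <= d}) ->
  (forall f c, {homo f : c d / le c d >-> c <= d} -> cfg_sum c = n ->
               step pt n f c <= step p n f c) ->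
  forall t c, cfg_sum c = n -> hitP pt n i t c <= hitP p n i t c.
Proof.
move=> hpt hitP_homo_p step_param; elim=> [|t IH] c hc /=; case: ifP => // _.
apply: le_trans (step_param _ _ (hitP_homo_p t) hc).
exact: step_le hpt IH hc.
Qed.

Lemma hitP_op1_homo p t : (1 < n)%N -> 0 <= p <= 1 ->
  {homo hitP p n Op1 t : c d / cfg_le n c d >-> c <= d}.
Proof.
move=> n_gt1 hp; apply: hitP_homo => //.
- by move=> c d [].
- by move=> c d [/= _ hd c1d1 _] /eqP c1; apply/eqP; lia.
- by move=> f; apply: step_homo_cfg.
Qed.

Lemma hitP_op2_homo p t : (1 < n)%N -> 0 <= p <= 1 ->
  {homo hitP p n Op2 t : c d / cfg_le n d c >-> c <= d}.
Proof.
move=> n_gt1 hp; apply: hitP_homo => //.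
- by move=> c d [].
- by move=> c d [/= hd _ _ c2d2] /eqP c2; apply/eqP; lia.
move=> f f_homo c d dc; rewrite -lerN2 -!step_opp.
by apply: step_homo_cfg dc => // c' d' cd'; rewrite lerN2; apply: f_homo.
Qed.

Lemma hitP_op1_param p pt t c : (1 < n)%N -> 0 <= p <= 1 -> 0 <= pt <= 1 ->
  pt <= p -> cfg_sum c = n -> hitP pt n Op1 t c <= hitP p n Op1 t c.
Proof.
move=> n_gt1 hp hpt pt_le; apply: (hitP_le_param (le := cfg_le n)) => // [t'|f c'].
- exact: hitP_op1_homo.
- exact: step_homo_param.
Qed.

Lemma hitP_op2_param p pt t c : (1 < n)%N -> 0 <= p <= 1 -> 0 <= pt <= 1 ->
  p <= pt -> cfg_sum c = n -> hitP pt n Op2 t c <= hitP p n Op2 t c.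
Proof.
move=> n_gt1 hp hpt p_le.
apply: (hitP_le_param (le := fun c d => cfg_le n d c)) => // [t'|f c' f_homo hc'].
- exact: hitP_op2_homo.
rewrite -lerN2 -!step_opp.
by apply: step_homo_param => // d d' dd'; rewrite lerN2; apply: f_homo.
Qed.

End StepOperator.

Theorem theorem2 (R : realFieldType) (n : nat) (p pt : R)
    (x1 x2 u y1 y2 v : nat) (t : nat) :
  (1 < n)%N ->
  0 <= p <= 1 -> 0 <= pt <= 1 ->
  (x1 + x2 + u)%N = n -> (y1 + y2 + v)%N = n ->
  ((pt <= p -> (y1 <= x1)%N -> (x2 <= y2)%N ->
      hitP pt n Op1 t (mkcfg y1 y2 v) <= hitP p n Op1 t (mkcfg x1 x2 u))
   /\
   (p <= pt -> (x1 <= y1)%N -> (y2 <= x2)%N ->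
      hitP pt n Op2 t (mkcfg y1 y2 v) <= hitP p n Op2 t (mkcfg x1 x2 u))).
Proof.
move=> n_gt1 hp hpt hx hy; split=> p_le le1 le2.
- apply: le_trans (hitP_op1_param t n_gt1 hp hpt p_le (c := mkcfg y1 y2 v) hy) _.
  exact: (hitP_op1_homo t n_gt1 hp (And4 hy hx le1 le2)).
- apply: le_trans (hitP_op2_param t n_gt1 hp hpt p_le (c := mkcfg y1 y2 v) hy) _.
  exact: (hitP_op2_homo t n_gt1 hp (And4 hx hy le1 le2)).
Qed.
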